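(* For $d=2$ and $U\in C^\infty(\mathbb{T}^2)$, $Q(U)={}^tP\,D(-U)\,P$, where $P=\begin{pmatrix}0&-1\\1&0\end{pmatrix}$.
   Context: $\mathbb{T}^2=\mathbb{R}^2/\mathbb{Z}^2$. $D(W)$: ${}^tlD(W)l=\inf_{f\in C^\infty(\mathbb{T}^2)}\int|l-\nabla f|^2e^{-2W}dx/\int e^{-2W}$. $\mathcal{F}_{sol}=\{p\in(C^\infty(\mathbb{T}^2))^2:\operatorname{div}p=0,\ \int p\,dx=0\}$; $Q(U)$ is the symmetric matrix with ${}^tlQ(U)l=\inf_{p\in\mathcal{F}_{sol}}\int|l-p|^2e^{2U}dx/\int e^{2U}dx$. *)

From Stdlib Require Import Reals.
From Coquelicot Require Import Coquelicot.
From mathcomp Require Import all_boot all_algebra.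
From mathcomp Require Import Rstruct.

Set Implicit Arguments.
Unset Strict Implicit.
Unset Printing Implicit Defensive.

Local Open Scope R_scope.

(* Functions on T^2 = R^2/Z^2 are represented as Z^2-periodic functions on R^2. *)
Definition periodic2 (f : R * R -> R) : Prop :=
  forall x y : R, f (x + 1, y) = f (x, y) /\ f (x, y + 1) = f (x, y).

Definition dx (f : R * R -> R) : R * R -> R :=
  fun z => Derive (fun t => f (t, snd z)) (fst z).
Definition dy (f : R * R -> R) : R * R -> R :=
  fun z => Derive (fun t => f (fst z, t)) (snd z).

Fixpoint Ck (k : nat) (f : R * R -> R) : Prop :=
  match k with
  | O => forall z : R * R, continuous f z
  | S k' => (forall z : R * R, continuous f z) /\
            (forall z : R * R, ex_derive (fun t => f (t, snd z)) (fst z)) /\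
            (forall z : R * R, ex_derive (fun t => f (fst z, t)) (snd z)) /\
            Ck k' (dx f) /\ Ck k' (dy f)
  end.

Definition smooth2 (f : R * R -> R) : Prop := forall k : nat, Ck k f.

Definition Cinf_T2 (f : R * R -> R) : Prop := smooth2 f /\ periodic2 f.

Definition intT2 (g : R * R -> R) : R :=
  RInt (fun x => RInt (fun y => g (x, y)) 0 1) 0 1.

Definition D_form (W : R * R -> R) (l1 l2 : R) : R :=
  real (Glb_Rbar (fun r : R => exists f : R * R -> R, Cinf_T2 f /\
     r = intT2 (fun z => ((l1 - dx f z) ^ 2 + (l2 - dy f z) ^ 2) * exp (-2 * W z))
         / intT2 (fun z => exp (-2 * W z)))).

Definition F_sol (p1 p2 : R * R -> R) : Prop :=
  Cinf_T2 p1 /\ Cinf_T2 p2 /\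
  (forall z, dx p1 z + dy p2 z = 0) /\
  intT2 p1 = 0 /\ intT2 p2 = 0.

Definition Q_form (U : R * R -> R) (l1 l2 : R) : R :=
  real (Glb_Rbar (fun r : R => exists p1 p2 : R * R -> R, F_sol p1 p2 /\
     r = intT2 (fun z => ((l1 - p1 z) ^ 2 + (l2 - p2 z) ^ 2) * exp (2 * U z))
         / intT2 (fun z => exp (2 * U z)))).

(* the symmetric 2x2 matrix whose quadratic form is q (polarization) *)
Definition e1 (i : 'I_2) : R := if val i == 0%N then 1 else 0.
Definition e2 (i : 'I_2) : R := if val i == 0%N then 0 else 1.

Definition sym_mx_of_form (q : R -> R -> R) : 'M[R]_2 :=
  \matrix_(i < 2, j < 2)
    ((q (e1 i + e1 j) (e2 i + e2 j) - q (e1 i) (e2 i) - q (e1 j) (e2 j)) / 2).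

Definition Dmx (W : R * R -> R) : 'M[R]_2 := sym_mx_of_form (D_form W).
Definition Qmx (U : R * R -> R) : 'M[R]_2 := sym_mx_of_form (Q_form U).

Definition Pmx : 'M[R]_2 :=
  \matrix_(i < 2, j < 2)
    (if (val i == 0%N) && (val j == 1%N) then -1
     else if (val i == 1%N) && (val j == 0%N) then 1 else 0).

(* In two dimensions a mean-zero divergence-free field is a rotated gradient: [p = (- dy g, dx g)]
   for a stream function [g], which is periodic because [p] has zero mean.  Hence the variational
   problem defining [Q(U)] at [l] is the one defining [D(-U)] at the rotated vector [P l], that is
   [Q_form U l1 l2 = D_form (-U) l2 (- l1)].  The infimum over the linear space of test functions
   makes [D_form] homogeneous of degree 2 and makes it satisfy the parallelogram law, so it is a
   quadratic form, and polarization turns the identity of forms into [Q(U) = tP D(-U) P]. *)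

From Stdlib Require Import Reals Lra FunctionalExtensionality.
From Coquelicot Require Import Coquelicot.
From mathcomp Require Import all_boot all_algebra.
From mathcomp Require Import Rstruct.

Set Implicit Arguments.
Unset Strict Implicit.
Unset Printing Implicit Defensive.

Local Open Scope R_scope.

Definition continuous2 (h : R * R -> R) : Prop := forall z, continuous h z.

Lemma continuous2_continuity_2d_pt (h : R * R -> R) x y :
  continuous h (x, y) -> continuity_2d_pt (fun u v => h (u, v)) x y.
Proof. by move=> hc; apply/continuity_2d_pt_filterlim; apply: filterlim_ext hc => -[]. Qed.

Lemma continuity_2d_pt_continuous (h : R * R -> R) x y :
  continuity_2d_pt (fun u v => h (u, v)) x y -> continuous h (x, y).
Proof. by move=> /continuity_2d_pt_filterlim hc; apply: filterlim_ext hc => -[]. Qed.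

Lemma continuous2_const c : continuous2 (fun _ => c).
Proof. move=> z; exact: continuous_const. Qed.

Lemma continuous_slice_snd (h : R * R -> R) x :
  continuous2 h -> forall y, continuous (fun y => h (x, y)) y.
Proof.
move=> hh y; apply: (continuous_comp (fun y => (x, y)) h); last exact: hh.
apply: continuous_comp_2; [exact: continuous_const | exact: continuous_id |].
by apply: continuous_ext; last exact: continuous_id; case.
Qed.

Lemma continuous_slice_fst (h : R * R -> R) y :
  continuous2 h -> forall x, continuous (fun x => h (x, y)) x.
Proof.
move=> hh x; apply: (continuous_comp (fun x => (x, y)) h); last exact: hh.
apply: continuous_comp_2; [exact: continuous_id | exact: continuous_const |].
by apply: continuous_ext; last exact: continuous_id; case.
Qed.

Lemma continuous2_swap (h : R * R -> R) :
  continuous2 h -> continuous2 (fun z => h (snd z, fst z)).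
Proof.
move=> hh z; apply: (continuous_comp (fun z : R * R => (snd z, fst z)) h); last exact: hh.
apply: continuous_comp_2; [exact: continuous_snd | exact: continuous_fst |].
by apply: continuous_ext; last exact: continuous_id; case.
Qed.

Lemma continuous2_plus f g : continuous2 f -> continuous2 g -> continuous2 (fun z => f z + g z).
Proof. by move=> hf hg z; apply: (continuous_plus f g). Qed.

Lemma continuous2_mult f g : continuous2 f -> continuous2 g -> continuous2 (fun z => f z * g z).
Proof. by move=> hf hg z; apply: (continuous_mult f g). Qed.

Lemma continuous2_opp f : continuous2 f -> continuous2 (fun z => - f z).
Proof. by move=> hf z; apply: (continuous_opp f). Qed.

Lemma continuous2_minus f g : continuous2 f -> continuous2 g -> continuous2 (fun z => f z - g z).
Proof. by move=> hf hg; apply: continuous2_plus => //; apply: continuous2_opp. Qed.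

Lemma continuous2_exp f : continuous2 f -> continuous2 (fun z => exp (f z)).
Proof.
move=> hf z; apply: (continuous_comp f exp); first exact: hf.
apply: ex_derive_continuous; exists (exp (f z)).
exact/is_derive_Reals/derivable_pt_lim_exp.
Qed.

Lemma continuous2_pow2 f : continuous2 f -> continuous2 (fun z => f z ^ 2).
Proof.
move=> hf; have -> : (fun z => f z ^ 2) = (fun z => f z * f z).
  by apply: functional_extensionality => z; ring.
exact: continuous2_mult.
Qed.

Lemma ex_RInt_of_continuous (f : R -> R) a b : (forall x, continuous f x) -> ex_RInt f a b.
Proof. by move=> hf; apply: ex_RInt_continuous => x _; apply: hf. Qed.

(* Specializations to [R -> R] of Coquelicot lemmas, whose generic [plus], [minus], [scal] and
   [opp] do not reduce to [Rplus], [Rminus], [Rmult] and [Ropp] under [rewrite]. *)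
Lemma RInt_plusR (f g : R -> R) a b : ex_RInt f a b -> ex_RInt g a b ->
  RInt (fun x => f x + g x) a b = RInt f a b + RInt g a b.
Proof. exact: RInt_plus. Qed.

Lemma RInt_minusR (f g : R -> R) a b : ex_RInt f a b -> ex_RInt g a b ->
  RInt (fun x => f x - g x) a b = RInt f a b - RInt g a b.
Proof. exact: RInt_minus. Qed.

Lemma RInt_scalR (f : R -> R) a b c : ex_RInt f a b ->
  RInt (fun x => c * f x) a b = c * RInt f a b.
Proof. exact: RInt_scal. Qed.

Lemma RInt_oppR (f : R -> R) a b : ex_RInt f a b -> RInt (fun x => - f x) a b = - RInt f a b.
Proof. exact: RInt_opp. Qed.

Lemma RInt_constR a b c : RInt (fun _ => c) a b = (b - a) * c.
Proof. exact: RInt_const. Qed.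

Lemma RInt_pointR (f : R -> R) a : RInt f a a = 0.
Proof. exact: RInt_point. Qed.

Lemma RInt_swapR (f : R -> R) a b : ex_RInt f a b -> RInt f b a = - RInt f a b.
Proof. by move=> hf; rewrite -(opp_RInt_swap f a b hf). Qed.

Lemma ex_RInt_slice_snd (h : R * R -> R) x a b :
  continuous2 h -> ex_RInt (fun y => h (x, y)) a b.
Proof. by move=> hh; apply/ex_RInt_of_continuous/continuous_slice_snd. Qed.

Lemma is_derive_RInt_upper (f : R -> R) a x : (forall t, continuous f t) ->
  is_derive (fun b => RInt f a b) x (f x).
Proof.
move=> hf; apply: is_derive_RInt; last exact: hf.
by apply: filter_forall => b; apply/RInt_correct/ex_RInt_of_continuous.
Qed.

Lemma constant_of_is_derive_0 (phi : R -> R) : (forall t, is_derive phi t 0) ->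
  forall a b, phi a = phi b.
Proof.
move=> hphi a b.
have [|c [_ hc]] := MVT_gen phi a b (fun _ => 0) (fun x _ => hphi x).
  by move=> x _; apply/continuity_pt_filterlim/ex_derive_continuous; exists 0.
lra.
Qed.

Lemma continuous_RInt_param_le (h : R * R -> R) a b x0 : a <= b -> continuous2 h ->
  continuous (fun x => RInt (fun y => h (x, y)) a b) x0.
Proof.
move=> hab hh; apply/continuity_pt_filterlim/continuity_pt_locally => eps.
have hc t : a <= t <= b -> continuity_2d_pt (fun u v => h (u, v)) x0 t.
  by move=> _; apply: continuous2_continuity_2d_pt.
have heps : 0 < eps / (b - a + 1) by apply: Rdiv_lt_0_compat; [exact: cond_pos | lra].
have [d hd] := uniform_continuity_2d_1d' _ a b x0 hc (mkposreal _ heps).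
exists d => y /= hy.
have hex x : ex_RInt (fun t => h (x, t)) a b by apply: ex_RInt_slice_snd.
rewrite -RInt_minusR //.
apply: (Rle_lt_trans _ ((b - a) * (eps / (b - a + 1)))).
  apply: abs_RInt_le_const => //; first exact: ex_RInt_minus.
  move=> t ht; apply: Rlt_le; apply: (hd t x0 t y ht _ ht).
  - by have := cond_pos d; split; lra.
  - by move/Rabs_lt_between': hy; lra.
  - by rewrite Rminus_diag Rabs_R0; apply: cond_pos.
apply: (Rlt_le_trans _ ((b - a + 1) * (eps / (b - a + 1)))).
  by apply: Rmult_lt_compat_r => //; lra.
by right; field; lra.
Qed.

Lemma continuous_RInt_param (h : R * R -> R) a b x0 : continuous2 h ->
  continuous (fun x => RInt (fun y => h (x, y)) a b) x0.
Proof.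
move=> hh; case: (Rle_dec a b) => hab; first exact: continuous_RInt_param_le.
apply: (continuous_ext (fun x => - RInt (fun y => h (x, y)) b a)).
  by move=> x; rewrite (@RInt_swapR _ b a); [lra | apply: ex_RInt_slice_snd].
apply: (continuous_opp (fun x => RInt (fun y => h (x, y)) b a)).
by apply: continuous_RInt_param_le => //; lra.
Qed.

(* Both sides, as functions of the upper bound [s] replacing [b], vanish at [a] and have
   derivative [RInt (fun y => h (s, y)) c d]. *)
Lemma RInt_iterated_swap (h : R * R -> R) a b c d : continuous2 h ->
  RInt (fun y => RInt (fun x => h (x, y)) a b) c d =
  RInt (fun x => RInt (fun y => h (x, y)) c d) a b.
Proof.
move=> hh.
pose F s := RInt (fun y => RInt (fun x => h (x, y)) a s) c d.
pose G s := RInt (fun x => RInt (fun y => h (x, y)) c d) a s.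
have dslice y s : is_derive (fun u => RInt (fun x => h (x, y)) a u) s (h (s, y)).
  by apply: (@is_derive_RInt_upper (fun x => h (x, y))); apply: continuous_slice_fst.
have dG s : is_derive G s (RInt (fun y => h (s, y)) c d).
  by apply: (@is_derive_RInt_upper (fun x => RInt (fun y => h (x, y)) c d)) => x;
    apply: continuous_RInt_param.
have dF s : is_derive F s (RInt (fun y => h (s, y)) c d).
  rewrite (RInt_ext _ (fun y => Derive (fun u => RInt (fun x => h (x, y)) a u) s)); last first.
    by move=> y _; symmetry; apply: is_derive_unique.
  apply: (is_derive_RInt_param (fun u y => RInt (fun x => h (x, y)) a u)).
  - by apply: filter_forall => u y _; exists (h (u, y)).
  - move=> y _; apply: (continuity_2d_pt_ext (fun u v => h (u, v))).
      by move=> u v; symmetry; apply: is_derive_unique.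
    exact: continuous2_continuity_2d_pt.
  - apply: filter_forall => u; apply: ex_RInt_of_continuous => y.
    by have /= := @continuous_RInt_param _ a u y (continuous2_swap hh).
have F0 : F a = 0.
  rewrite /F (RInt_ext _ (fun _ => 0)) => [|y _]; last exact: RInt_pointR.
  by rewrite RInt_constR Rmult_0_r.
have G0 : G a = 0 by apply: RInt_pointR.
have : F b - G b = F a - G a.
  apply: (@constant_of_is_derive_0 (fun s => F s - G s)) => t.
  have := is_derive_minus F G t _ _ (dF t) (dG t).
  by rewrite /minus /plus /opp /= Rplus_opp_r.
by rewrite F0 G0 /F /G; lra.
Qed.

Lemma ex_RInt_iterated (h : R * R -> R) a b c d : continuous2 h ->
  ex_RInt (fun x => RInt (fun y => h (x, y)) c d) a b.
Proof. by move=> hh; apply: ex_RInt_of_continuous => x; apply: continuous_RInt_param. Qed.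

Lemma intT2_plus f g : continuous2 f -> continuous2 g ->
  intT2 (fun z => f z + g z) = intT2 f + intT2 g.
Proof.
move=> hf hg; rewrite /intT2 -RInt_plusR; try exact: ex_RInt_iterated.
by apply: RInt_ext => x _; apply: RInt_plusR; apply: ex_RInt_slice_snd.
Qed.

Lemma intT2_scal f c : continuous2 f -> intT2 (fun z => c * f z) = c * intT2 f.
Proof.
move=> hf; rewrite /intT2 -RInt_scalR; last exact: ex_RInt_iterated.
by apply: RInt_ext => x _; apply: RInt_scalR; apply: ex_RInt_slice_snd.
Qed.

Lemma intT2_ge0 f : continuous2 f -> (forall z, 0 <= f z) -> 0 <= intT2 f.
Proof.
move=> hf hpos; apply: RInt_ge_0; [lra | exact: ex_RInt_iterated |] => x _.
by apply: RInt_ge_0; [lra | exact: ex_RInt_slice_snd |] => y _.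
Qed.

Lemma dx_lin f g c1 c2 :
  (forall z, ex_derive (fun t => f (t, snd z)) (fst z)) ->
  (forall z, ex_derive (fun t => g (t, snd z)) (fst z)) ->
  dx (fun z => c1 * f z + c2 * g z) = (fun z => c1 * dx f z + c2 * dx g z).
Proof.
move=> hf hg; apply: functional_extensionality => z.
rewrite /dx Derive_plus ?Derive_scal //; exact: ex_derive_scal.
Qed.

Lemma dy_lin f g c1 c2 :
  (forall z, ex_derive (fun t => f (fst z, t)) (snd z)) ->
  (forall z, ex_derive (fun t => g (fst z, t)) (snd z)) ->
  dy (fun z => c1 * f z + c2 * g z) = (fun z => c1 * dy f z + c2 * dy g z).
Proof.
move=> hf hg; apply: functional_extensionality => z.
rewrite /dy Derive_plus ?Derive_scal //; exact: ex_derive_scal.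
Qed.

Lemma Ck_continuous k f : Ck k f -> continuous2 f.
Proof. by case: k => [|k] //= []. Qed.

Lemma Ck_lin k f g c1 c2 : Ck k f -> Ck k g -> Ck k (fun z => c1 * f z + c2 * g z).
Proof.
elim: k f g => [|k IH] f g /=.
  move=> hf hg; apply: continuous2_plus; apply: continuous2_mult => //;
  exact: continuous2_const.
move=> [cf [xf [yf [Dxf Dyf]]]] [cg [xg [yg [Dxg Dyg]]]].
split; last split; last split; last split.
- by apply: continuous2_plus; apply: continuous2_mult => //; apply: continuous2_const.
- by move=> z; apply: ex_derive_plus; apply: ex_derive_scal.
- by move=> z; apply: ex_derive_plus; apply: ex_derive_scal.
- by rewrite dx_lin //; apply: IH.
- by rewrite dy_lin //; apply: IH.
Qed.

Lemma Ck_const k c : Ck k (fun _ => c).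
Proof.
elim: k c => [|k IH] c /=; first exact: continuous2_const.
split; first exact: continuous2_const.
split; first by move=> z; apply: ex_derive_const.
split; first by move=> z; apply: ex_derive_const.
have -> : dx (fun _ => c) = (fun _ => 0).
  by apply: functional_extensionality => z; apply: Derive_const.
have -> : dy (fun _ => c) = (fun _ => 0).
  by apply: functional_extensionality => z; apply: Derive_const.
by split; apply: IH.
Qed.

Lemma Cinf_T2_const c : Cinf_T2 (fun _ => c).
Proof. by split=> [k | x y]; [apply: Ck_const |]. Qed.

Lemma Cinf_T2_lin f g c1 c2 : Cinf_T2 f -> Cinf_T2 g -> Cinf_T2 (fun z => c1 * f z + c2 * g z).
Proof.
move=> [sf pf] [sg pg]; split=> [k | x y]; first exact: Ck_lin.
by rewrite (proj1 (pf x y)) (proj2 (pf x y)) (proj1 (pg x y)) (proj2 (pg x y)).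
Qed.

Lemma smooth2_continuous f : smooth2 f -> continuous2 f.
Proof. by move=> hf; apply: (@Ck_continuous 0). Qed.

Lemma smooth2_dx f : smooth2 f -> smooth2 (dx f).
Proof. by move=> hf k; case: (hf k.+1) => _ [_ [_ []]]. Qed.

Lemma smooth2_dy f : smooth2 f -> smooth2 (dy f).
Proof. by move=> hf k; case: (hf k.+1) => _ [_ [_ []]]. Qed.

Lemma smooth2_ex_derive_x f : smooth2 f -> forall z, ex_derive (fun t => f (t, snd z)) (fst z).
Proof. by move=> hf; case: (hf 1%nat) => _ []. Qed.

Lemma smooth2_ex_derive_y f : smooth2 f -> forall z, ex_derive (fun t => f (fst z, t)) (snd z).
Proof. by move=> hf; case: (hf 1%nat) => _ [_ []]. Qed.

Lemma smooth2_opp f : smooth2 f -> smooth2 (fun z => - f z).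
Proof.
move=> hf k; have := Ck_lin (-1) 0 (hf k) (hf k).
by have -> : (fun z => -1 * f z + 0 * f z) = (fun z => - f z)
  by apply: functional_extensionality => z; ring.
Qed.

Lemma Derive_shift (g : R -> R) x c : Derive (fun t => g (t + c)) x = Derive g (x + c).
Proof.
rewrite /Derive; congr real; apply: Lim_ext => h.
by rewrite (_ : x + c + h = x + h + c) //; ring.
Qed.

Lemma periodic2_dx f : periodic2 f -> periodic2 (dx f).
Proof.
move=> hf x y; rewrite /dx /=; split; last by apply: Derive_ext => t; case: (hf t y).
by rewrite -Derive_shift; apply: Derive_ext => t; case: (hf t y).
Qed.

Lemma periodic2_dy f : periodic2 f -> periodic2 (dy f).
Proof.
move=> hf x y; rewrite /dy /=; split; first by apply: Derive_ext => t; case: (hf x t).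
by rewrite -Derive_shift; apply: Derive_ext => t; case: (hf x t).
Qed.

Lemma periodic2_opp f : periodic2 f -> periodic2 (fun z => - f z).
Proof. by move=> hf x y; case: (hf x y) => -> ->. Qed.

Lemma dx_dy f : smooth2 f -> forall z, dx (dy f) z = dy (dx f) z.
Proof.
move=> hf [x y]; rewrite /dx /dy /=.
apply: (Schwarz (fun u v => f (u, v))).
- apply: locally_2d_forall => u v; split; last split; last split.
  + exact: (smooth2_ex_derive_x hf (u, v)).
  + exact: (smooth2_ex_derive_y hf (u, v)).
  + exact: (smooth2_ex_derive_x (smooth2_dy hf) (u, v)).
  + exact: (smooth2_ex_derive_y (smooth2_dx hf) (u, v)).
- apply: (continuity_2d_pt_ext (fun u v => dx (dy f) (u, v))) => // .
  exact/continuous2_continuity_2d_pt/smooth2_continuous/smooth2_dx/smooth2_dy.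
- apply: (continuity_2d_pt_ext (fun u v => dy (dx f) (u, v))) => //.
  exact/continuous2_continuity_2d_pt/smooth2_continuous/smooth2_dy/smooth2_dx.
Qed.

Lemma intT2_dy f : Cinf_T2 f -> intT2 (dy f) = 0.
Proof.
move=> [sf pf]; rewrite /intT2 (RInt_ext _ (fun _ => 0)) ?RInt_constR ?Rmult_0_r // => x _.
rewrite [LHS](_ : _ = RInt (Derive (fun t => f (x, t))) 0 1) // RInt_Derive.
- by rewrite -{1}(Rplus_0_l 1) (proj2 (pf x 0)) Rminus_diag.
- by move=> t _; apply: (smooth2_ex_derive_y sf (x, t)).
- by move=> t _; apply/(continuous_slice_snd (h := dy f))/smooth2_continuous/smooth2_dy.
Qed.

Lemma intT2_dx f : Cinf_T2 f -> intT2 (dx f) = 0.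
Proof.
move=> [sf pf]; rewrite /intT2.
pose K x := RInt (fun y => f (x, y)) 0 1.
have dK x : is_derive K x (RInt (fun y => dx f (x, y)) 0 1).
  apply: (is_derive_RInt_param (fun u t => f (u, t))).
  - by apply: filter_forall => u t _; apply: (smooth2_ex_derive_x sf (u, t)).
  - move=> t _; apply: (continuity_2d_pt_ext (fun u v => dx f (u, v))) => //.
    exact/continuous2_continuity_2d_pt/smooth2_continuous/smooth2_dx.
  - by apply: filter_forall => u; apply/ex_RInt_slice_snd/smooth2_continuous.
rewrite (RInt_ext _ (Derive K)) => [|x _]; last by symmetry; apply: is_derive_unique.
rewrite RInt_Derive => [|x _|x _]; last first.
- apply: (continuous_ext (fun x => RInt (fun y => dx f (x, y)) 0 1)).
    by move=> t; symmetry; apply: is_derive_unique.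
  exact/continuous_RInt_param/smooth2_continuous/smooth2_dx.
- by exists (RInt (fun y => dx f (x, y)) 0 1).
rewrite /K (RInt_ext (fun y => f (1, y)) (fun y => f (0, y))) ?Rminus_diag // => y _.
by rewrite -{1}(Rplus_0_l 1); case: (pf 0 y).
Qed.

Lemma F_sol_rot_grad f : Cinf_T2 f -> F_sol (fun z => - dy f z) (dx f).
Proof.
move=> hf; have [sf pf] := hf.
split; last split; last split; last split.
- by split; [apply/smooth2_opp/smooth2_dy | apply/periodic2_opp/periodic2_dy].
- by split; [apply: smooth2_dx | apply: periodic2_dx].
- by move=> z; rewrite {1}/dx Derive_opp -[Derive _ _]/(dx (dy f) z) dx_dy //; ring.
- have -> : (fun z => - dy f z) = (fun z => -1 * dy f z + 0 * dy f z).
    by apply: functional_extensionality => z; ring.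
  have cdy : continuous2 (dy f) by apply/smooth2_continuous/smooth2_dy.
  have cs c : continuous2 (fun z => c * dy f z).
    by apply: continuous2_mult => //; apply: continuous2_const.
  by rewrite intT2_plus ?intT2_scal ?intT2_dy //; ring.
- exact: intT2_dx.
Qed.

Lemma continuous2_of_partial_x (h a : R * R -> R) :
  (forall x y, is_derive (fun t => h (t, y)) x (a (x, y))) -> continuous2 a ->
  (forall x y, continuous (fun t => h (x, t)) y) -> continuous2 h.
Proof.
move=> dh ca ch [x0 y0]; apply: continuity_2d_pt_continuous => eps.
have [d1 hd1] := continuous2_continuity_2d_pt (ca (x0, y0)) (mkposreal 1 Rlt_0_1).
have heps2 : 0 < eps / 2 by have := cond_pos eps; lra.
have /continuity_pt_filterlim/continuity_pt_locally/(_ (mkposreal _ heps2)) [d2 hd2] :=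
  ch x0 y0.
pose M := Rabs (a (x0, y0)) + 1.
have hM : 0 < M by have := Rabs_pos (a (x0, y0)); rewrite /M; lra.
have heps3 : 0 < eps / (2 * M) by apply: Rdiv_lt_0_compat; have := cond_pos eps; lra.
pose d := Rmin d1 (Rmin d2 (eps / (2 * M))).
have hd1d : d <= d1 by apply: Rmin_l.
have hd2d : d <= d2 by apply: (Rle_trans _ _ _ (Rmin_r _ _)); apply: Rmin_l.
have hd3d : d <= eps / (2 * M) by apply: (Rle_trans _ _ _ (Rmin_r _ _)); apply: Rmin_r.
have hd : 0 < d.
  by apply: Rmin_pos; [apply: cond_pos | apply: Rmin_pos; [apply: cond_pos | lra]].
exists (mkposreal d hd) => u v /= hu hv.
have [|c [hc hmvt]] :=
  MVT_gen (fun t => h (t, v)) x0 u (fun t => a (t, v)) (fun t _ => dh t v).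
  by move=> t _; apply/continuity_pt_filterlim/ex_derive_continuous; exists (a (t, v)).
have hcx : Rabs (c - x0) <= Rabs (u - x0).
  by apply: Rabs_le_between_min_max; rewrite Rmin_comm Rmax_comm.
have hac : Rabs (a (c, v)) <= M.
  have := Rabs_triang_inv (a (c, v)) (a (x0, y0)).
  have : Rabs (a (c, v) - a (x0, y0)) < 1 by apply: hd1; lra.
  by rewrite /M; lra.
have hx : Rabs (h (u, v) - h (x0, v)) < eps / 2.
  rewrite hmvt Rabs_mult; apply: (Rle_lt_trans _ (M * Rabs (u - x0))).
    by apply: Rmult_le_compat_r => //; apply: Rabs_pos.
  apply: (Rlt_le_trans _ (M * (eps / (2 * M)))); first by apply: Rmult_lt_compat_l; lra.
  by right; field; lra.
have hy : Rabs (h (x0, v) - h (x0, y0)) < eps / 2.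
  by apply: hd2; change (Rabs (v - y0) < d2); lra.
rewrite (_ : h (u, v) - h (x0, y0) = (h (u, v) - h (x0, v)) + (h (x0, v) - h (x0, y0)));
  last ring.
by have := Rabs_triang (h (u, v) - h (x0, v)) (h (x0, v) - h (x0, y0)); lra.
Qed.

Lemma constant2_of_is_derive_0 (h : R * R -> R) :
  (forall x y, is_derive (fun t => h (t, y)) x 0) ->
  (forall x y, is_derive (fun t => h (x, t)) y 0) ->
  forall x y, h (x, y) = h (0, 0).
Proof.
move=> hx hy x y.
rewrite (@constant_of_is_derive_0 (fun t => h (t, y)) (fun t => hx t y) x 0).
exact: (@constant_of_is_derive_0 (fun t => h (0, t)) (fun t => hy 0 t) y 0).
Qed.

Lemma is_derive_minusR (f g : R -> R) x a b :
  is_derive f x a -> is_derive g x b -> is_derive (fun t => f t - g t) x (a - b).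
Proof. exact: is_derive_minus. Qed.

Lemma is_derive_shift (f : R -> R) x c a :
  is_derive f (x + c) a -> is_derive (fun t => f (t + c)) x a.
Proof.
move=> hf; have := is_derive_comp f (fun t => t + c) x a 1 hf.
by rewrite /scal /= /mult /= Rmult_1_l; apply; auto_derive.
Qed.

Section PeriodicGradient.
Variables g a b : R * R -> R.
Hypothesis dgx : forall x y, is_derive (fun t => g (t, y)) x (a (x, y)).
Hypothesis dgy : forall x y, is_derive (fun t => g (x, t)) y (b (x, y)).
Hypothesis pa : periodic2 a.
Hypothesis pb : periodic2 b.

Lemma increment_x_const x y : g (x + 1, y) - g (x, y) = g (1, 0) - g (0, 0).
Proof.
have := @constant2_of_is_derive_0 (fun z => g (fst z + 1, snd z) - g z).
rewrite /= Rplus_0_l; apply=> {x y} x y /=.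
- rewrite -(Rminus_diag (a (x, y))) -{1}(proj1 (pa x y)).
  apply: (@is_derive_minusR (fun t => g (t + 1, y))) => //.
  exact: (@is_derive_shift (fun t => g (t, y))).
- rewrite -(Rminus_diag (b (x, y))) -{1}(proj1 (pb x y)).
  exact: (@is_derive_minusR (fun t => g _) (fun t => g _)).
Qed.

Lemma increment_y_const x y : g (x, y + 1) - g (x, y) = g (0, 1) - g (0, 0).
Proof.
have := @constant2_of_is_derive_0 (fun z => g (fst z, snd z + 1) - g z).
rewrite /= Rplus_0_l; apply=> {x y} x y /=.
- rewrite -(Rminus_diag (a (x, y))) -{1}(proj2 (pa x y)).
  exact: (@is_derive_minusR (fun t => g _) (fun t => g _)).
- rewrite -(Rminus_diag (b (x, y))) -{1}(proj2 (pb x y)).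
  apply: (@is_derive_minusR (fun t => g (x, t + 1))) => //.
  exact: (@is_derive_shift (fun t => g (x, t))).
Qed.

End PeriodicGradient.

(* [dx] of it is [p2] by construction; [dy] of it is [- p1] because [p] is divergence free. *)
Definition stream_function (p1 p2 : R * R -> R) (z : R * R) : R :=
  RInt (fun t => p2 (t, snd z)) 0 (fst z) - RInt (fun s => p1 (0, s)) 0 (snd z).

Section StreamFunction.
Variables p1 p2 : R * R -> R.
Hypothesis hp : F_sol p1 p2.

Let s1 : smooth2 p1. Proof. by case: hp => -[]. Qed.
Let s2 : smooth2 p2. Proof. by case: hp => _ [[]]. Qed.

Lemma is_derive_stream_function_x x y :
  is_derive (fun t => stream_function p1 p2 (t, y)) x (p2 (x, y)).
Proof.
rewrite /stream_function /= -[p2 (x, y)]Rminus_0_r.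
apply: (@is_derive_minusR (fun t => RInt (fun t => p2 (t, y)) 0 t));
  last exact: is_derive_const.
by apply: is_derive_RInt_upper; apply/continuous_slice_fst/smooth2_continuous.
Qed.

Lemma is_derive_stream_function_y x y :
  is_derive (fun t => stream_function p1 p2 (x, t)) y (- p1 (x, y)).
Proof.
have [_ [_ [hdiv _]]] := hp.
rewrite /stream_function /= (_ : - p1 (x, y) = - (p1 (x, y) - p1 (0, y)) - p1 (0, y)); last ring.
apply: is_derive_minusR; last first.
  apply: (@is_derive_RInt_upper (fun s => p1 (0, s))).
  exact/continuous_slice_snd/smooth2_continuous.
have cdx1 := smooth2_continuous (smooth2_dx s1).
have -> : - (p1 (x, y) - p1 (0, y)) = RInt (fun u => Derive (fun t => p2 (u, t)) y) 0 x.
  rewrite (RInt_ext _ (fun u => - Derive (fun t => p1 (t, y)) u)) => [|u _]; last first.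
    by have := hdiv (u, y); rewrite /dx /dy /=; lra.
  rewrite RInt_oppR ?RInt_Derive // => [t _|t _|].
  - exact: (smooth2_ex_derive_x s1 (t, y)).
  - exact: (continuous_slice_fst (h := dx p1)).
  - by apply: ex_RInt_of_continuous; apply: (continuous_slice_fst (h := dx p1)).
apply: (is_derive_RInt_param (fun t u => p2 (u, t))).
- by apply: filter_forall => t u _; apply: (smooth2_ex_derive_y s2 (u, t)).
- move=> t _; apply: (continuity_2d_pt_ext (fun a b => dy p2 (b, a))) => //.
  apply: (continuous2_continuity_2d_pt (h := fun z => dy p2 (snd z, fst z))).
  exact/continuous2_swap/smooth2_continuous/smooth2_dy.
- apply: filter_forall => t.
  exact/ex_RInt_of_continuous/continuous_slice_fst/smooth2_continuous.
Qed.

Lemma dx_stream_function : dx (stream_function p1 p2) = p2.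
Proof.
apply: functional_extensionality => -[x y].
by apply: is_derive_unique; apply: is_derive_stream_function_x.
Qed.

Lemma dy_stream_function : dy (stream_function p1 p2) = (fun z => - p1 z).
Proof.
apply: functional_extensionality => -[x y].
by apply: is_derive_unique; apply: is_derive_stream_function_y.
Qed.

Lemma smooth2_stream_function : smooth2 (stream_function p1 p2).
Proof.
have cpot : continuous2 (stream_function p1 p2).
  apply: (continuous2_of_partial_x is_derive_stream_function_x (smooth2_continuous s2)) => x y.
  by apply: ex_derive_continuous; eexists; apply: is_derive_stream_function_y.
case=> [|k] //; split=> //; split; last split; last split.
- by move=> [x y]; eexists; apply: is_derive_stream_function_x.
- by move=> [x y]; eexists; apply: is_derive_stream_function_y.
- by rewrite dx_stream_function.
- by rewrite dy_stream_function; apply: smooth2_opp.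
Qed.

Lemma periodic2_stream_function : periodic2 (stream_function p1 p2).
Proof.
have [[_ pp1] [[_ pp2] [_ [int1 int2]]]] := hp.
have c1 := smooth2_continuous s1; have c2 := smooth2_continuous s2.
pose g := stream_function p1 p2.
have gx y : g (1, y) - g (0, y) = RInt (fun t => p2 (t, y)) 0 1.
  by rewrite /g /stream_function /= RInt_pointR; ring.
have gy x : g (x, 1) - g (x, 0) = - RInt (fun t => p1 (x, t)) 0 1.
  rewrite -RInt_oppR; last exact: ex_RInt_slice_snd.
  apply/esym/is_RInt_unique; apply: (is_RInt_derive (fun t => g (x, t))) => t _.
    exact: is_derive_stream_function_y.
  by apply: (continuous_slice_snd (h := fun z => - p1 z)); apply: continuous2_opp.
have incx := increment_x_const is_derive_stream_function_x is_derive_stream_function_y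
  pp2 (periodic2_opp pp1).
have incy := increment_y_const is_derive_stream_function_x is_derive_stream_function_y
  pp2 (periodic2_opp pp1).
have px : g (1, 0) - g (0, 0) = intT2 p2.
  rewrite /intT2 -RInt_iterated_swap //.
  rewrite (RInt_ext _ (fun _ => g (1, 0) - g (0, 0))) => [|y _];
    last by rewrite -gx -(incx 0 y) Rplus_0_l.
  by rewrite RInt_constR; ring.
have py : g (0, 1) - g (0, 0) = - intT2 p1.
  rewrite /intT2 -RInt_oppR; last exact: ex_RInt_iterated.
  rewrite (RInt_ext _ (fun _ => g (0, 1) - g (0, 0))) => [|x _];
    last by rewrite -(incy x 0) Rplus_0_l gy.
  by rewrite RInt_constR; ring.
rewrite /g {}int1 {}int2 in px py.
by move=> x y; split; [have := incx x y | have := incy x y]; lra.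
Qed.

End StreamFunction.

Lemma Q_form_rotate U l1 l2 : Q_form U l1 l2 = D_form (fun z => - U z) l2 (- l1).
Proof.
rewrite /Q_form /D_form; congr real; apply: Glb_Rbar_eqset => r; split.
- move=> [p1 [p2 [hp ->]]]; exists (stream_function p1 p2).
  split; first by split; [apply: smooth2_stream_function | apply: periodic2_stream_function].
  rewrite dx_stream_function // dy_stream_function //.
  by congr Rdiv; congr intT2; apply: functional_extensionality => z;
    rewrite (_ : -2 * - U z = 2 * U z); ring.
- move=> [f [hf ->]]; exists (fun z => - dy f z), (dx f).
  split; first exact: F_sol_rot_grad.
  by congr Rdiv; congr intT2; apply: functional_extensionality => z;
    rewrite (_ : -2 * - U z = 2 * U z); ring.
Qed.

Lemma Glb_Rbar_nonneg_le (S : R -> Prop) r :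
  (forall s, S s -> 0 <= s) -> S r -> real (Glb_Rbar S) <= r.
Proof.
move=> hS hr; have [lb glb] := Glb_Rbar_correct S.
have : Rbar_le 0 (Glb_Rbar S) by apply: glb => s /hS.
by have := lb r hr; case: (Glb_Rbar S).
Qed.

Lemma Glb_Rbar_nonneg_ge (S : R -> Prop) r m :
  (forall s, S s -> 0 <= s) -> S r -> (forall s, S s -> m <= s) -> m <= real (Glb_Rbar S).
Proof.
move=> hS hr hm; have [lb glb] := Glb_Rbar_correct S.
have : Rbar_le 0 (Glb_Rbar S) by apply: glb => s /hS.
have : Rbar_le m (Glb_Rbar S) by apply: glb.
by have := lb r hr; case: (Glb_Rbar S).
Qed.

Definition D_integrand (W : R * R -> R) (l1 l2 : R) (f : R * R -> R) (z : R * R) : R :=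
  ((l1 - dx f z) ^ 2 + (l2 - dy f z) ^ 2) * exp (-2 * W z).

Definition D_quotient (W : R * R -> R) (l1 l2 : R) (f : R * R -> R) : R :=
  intT2 (D_integrand W l1 l2 f) / intT2 (fun z => exp (-2 * W z)).

Section DForm.
Variable W : R * R -> R.
Hypothesis hW : continuous2 W.

Lemma continuous2_D_integrand l1 l2 f : Cinf_T2 f -> continuous2 (D_integrand W l1 l2 f).
Proof.
move=> [sf _]; apply: continuous2_mult.
  by apply: continuous2_plus; apply: continuous2_pow2; apply: continuous2_minus;
    [apply: continuous2_const | apply/smooth2_continuous/smooth2_dx
    | apply: continuous2_const | apply/smooth2_continuous/smooth2_dy].
by apply/continuous2_exp/continuous2_mult => //; apply: continuous2_const.
Qed.

Lemma D_quotient_ge0 l1 l2 f : Cinf_T2 f -> 0 <= D_quotient W l1 l2 f.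
Proof.
move=> hf; rewrite /D_quotient.
have hnum : 0 <= intT2 (D_integrand W l1 l2 f).
  apply: intT2_ge0 => [|z]; first exact: continuous2_D_integrand.
  apply: Rmult_le_pos; last exact/Rlt_le/exp_pos.
  by apply: Rplus_le_le_0_compat; apply: pow2_ge_0.
have hden : 0 <= intT2 (fun z => exp (-2 * W z)).
  apply: intT2_ge0 => [|z]; last exact/Rlt_le/exp_pos.
  by apply/continuous2_exp/continuous2_mult => //; apply: continuous2_const.
case: (Req_dec (intT2 (fun z => exp (-2 * W z))) 0) => [-> | hden0].
  by rewrite /Rdiv Rinv_0 Rmult_0_r; lra.
by apply: Rmult_le_pos => //; apply/Rlt_le/Rinv_0_lt_compat; lra.
Qed.

Lemma D_form_le l1 l2 f : Cinf_T2 f -> D_form W l1 l2 <= D_quotient W l1 l2 f.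
Proof.
move=> hf; apply: Glb_Rbar_nonneg_le; last by exists f.
by move=> _ [g [hg ->]]; apply: D_quotient_ge0.
Qed.

Lemma D_form_ge l1 l2 m :
  (forall f, Cinf_T2 f -> m <= D_quotient W l1 l2 f) -> m <= D_form W l1 l2.
Proof.
move=> hm; apply: (@Glb_Rbar_nonneg_ge _ (D_quotient W l1 l2 (fun _ => 0))).
- by move=> _ [g [hg ->]]; apply: D_quotient_ge0.
- by exists (fun _ => 0); split => //; apply: Cinf_T2_const.
- by move=> _ [g [hg ->]]; apply: hm.
Qed.

Lemma D_integrand_lin l1 l2 f g c1 c2 : smooth2 f -> smooth2 g ->
  D_integrand W l1 l2 (fun z => c1 * f z + c2 * g z) =
  (fun z => ((l1 - (c1 * dx f z + c2 * dx g z)) ^ 2 +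
             (l2 - (c1 * dy f z + c2 * dy g z)) ^ 2) * exp (-2 * W z)).
Proof.
move=> sf sg; rewrite /D_integrand dx_lin ?dy_lin //;
  by [apply: smooth2_ex_derive_x | apply: smooth2_ex_derive_y].
Qed.

Lemma D_quotient_scale c l1 l2 f : Cinf_T2 f ->
  D_quotient W (c * l1) (c * l2) (fun z => c * f z + 0 * f z) = c ^ 2 * D_quotient W l1 l2 f.
Proof.
move=> hf; have [sf _] := hf.
rewrite /D_quotient /Rdiv D_integrand_lin // -Rmult_assoc -intT2_scal;
  last exact: continuous2_D_integrand.
by congr (intT2 _ * _); apply: functional_extensionality => z; rewrite /D_integrand; ring.
Qed.

Lemma D_quotient_parallelogram a1 a2 b1 b2 f g : Cinf_T2 f -> Cinf_T2 g ->
  D_quotient W (a1 + b1) (a2 + b2) (fun z => 1 * f z + 1 * g z) +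
  D_quotient W (a1 - b1) (a2 - b2) (fun z => 1 * f z + -1 * g z) =
  2 * D_quotient W a1 a2 f + 2 * D_quotient W b1 b2 g.
Proof.
move=> hf hg; have [sf _] := hf; have [sg _] := hg.
have cD l1 l2 h : Cinf_T2 h -> continuous2 (D_integrand W l1 l2 h).
  exact: continuous2_D_integrand.
have cD2 l1 l2 h : Cinf_T2 h -> continuous2 (fun z => 2 * D_integrand W l1 l2 h z).
  by move=> hh; apply: continuous2_mult; [apply: continuous2_const | apply: cD].
have := cD (a1 + b1) (a2 + b2) _ (Cinf_T2_lin 1 1 hf hg).
have := cD (a1 - b1) (a2 - b2) _ (Cinf_T2_lin 1 (-1) hf hg).
have := cD a1 a2 _ hf; have := cD b1 b2 _ hg.
have := cD2 a1 a2 _ hf; have := cD2 b1 b2 _ hg.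
move=> *; rewrite /D_quotient /Rdiv -!Rmult_assoc -!Rmult_plus_distr_r -!intT2_scal //.
rewrite -!intT2_plus //; congr (intT2 _ * _); apply: functional_extensionality => z.
by rewrite !D_integrand_lin // /D_integrand; ring.
Qed.

Lemma D_form_scale c l1 l2 : c <> 0 -> D_form W (c * l1) (c * l2) = c ^ 2 * D_form W l1 l2.
Proof.
suff le_scale d m1 m2 : d <> 0 -> D_form W (d * m1) (d * m2) <= d ^ 2 * D_form W m1 m2.
  move=> hc; apply: Rle_antisym; first exact: le_scale.
  have hc' : / c <> 0 by apply: Rinv_neq_0_compat.
  have := le_scale (/ c) (c * l1) (c * l2) hc'.
  have -> : / c * (c * l1) = l1 by field.
  have -> : / c * (c * l2) = l2 by field.
  move=> h; apply: (Rmult_le_reg_l ((/ c) ^ 2)); first exact: pow2_gt_0.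
  by rewrite -Rmult_assoc (_ : (/ c) ^ 2 * c ^ 2 = 1) ?Rmult_1_l //; field.
move=> hd; have hd2 : 0 < d ^ 2 by apply: pow2_gt_0.
suff : D_form W (d * m1) (d * m2) / d ^ 2 <= D_form W m1 m2.
  by move/(Rle_div_l _ _ _ hd2); rewrite [D_form W m1 m2 * _]Rmult_comm.
apply: D_form_ge => f hf; apply/Rle_div_l => //.
rewrite [_ * d ^ 2]Rmult_comm -D_quotient_scale //.
by apply: D_form_le; apply: Cinf_T2_lin.
Qed.

Lemma D_form_parallelogram_le a1 a2 b1 b2 :
  D_form W (a1 + b1) (a2 + b2) + D_form W (a1 - b1) (a2 - b2) <=
  2 * D_form W a1 a2 + 2 * D_form W b1 b2.
Proof.
set S := _ + _.
have key f g : Cinf_T2 f -> Cinf_T2 g ->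
    S <= 2 * D_quotient W a1 a2 f + 2 * D_quotient W b1 b2 g.
  move=> hf hg; rewrite -D_quotient_parallelogram //.
  by apply: Rplus_le_compat; apply: D_form_le; apply: Cinf_T2_lin.
suff : (S - 2 * D_form W a1 a2) / 2 <= D_form W b1 b2 by lra.
apply: D_form_ge => g hg.
suff : (S - 2 * D_quotient W b1 b2 g) / 2 <= D_form W a1 a2 by lra.
by apply: D_form_ge => f hf; have := key f g hf hg; lra.
Qed.

(* The reverse inequality is the one above at [(a + b, a - b)], by homogeneity. *)
Lemma D_form_parallelogram a1 a2 b1 b2 :
  D_form W (a1 + b1) (a2 + b2) + D_form W (a1 - b1) (a2 - b2) =
  2 * D_form W a1 a2 + 2 * D_form W b1 b2.
Proof.
apply: Rle_antisym; first exact: D_form_parallelogram_le.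
have := D_form_parallelogram_le (a1 + b1) (a2 + b2) (a1 - b1) (a2 - b2).
have -> : a1 + b1 + (a1 - b1) = 2 * a1 by ring.
have -> : a2 + b2 + (a2 - b2) = 2 * a2 by ring.
have -> : a1 + b1 - (a1 - b1) = 2 * b1 by ring.
have -> : a2 + b2 - (a2 - b2) = 2 * b2 by ring.
rewrite !D_form_scale //; lra.
Qed.

End DForm.

Lemma sym_mx_of_form_rotate (q : R -> R -> R) :
  (forall c a b, c <> 0 -> q (c * a) (c * b) = c ^ 2 * q a b) ->
  (forall a1 a2 b1 b2,
     q (a1 + b1) (a2 + b2) + q (a1 - b1) (a2 - b2) = 2 * q a1 a2 + 2 * q b1 b2) ->
  sym_mx_of_form (fun l1 l2 => q l2 (- l1)) = ((Pmx^T *m sym_mx_of_form q) *m Pmx)%R.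
Proof.
move=> hom par.
have homE c a b a' b' : c <> 0 -> a' = c * a -> b' = c * b -> q a' b' = c ^ 2 * q a b.
  by move=> hc -> ->; apply: hom.
have qy1 : q 0 (- (1)) = q 0 1 by rewrite (@homE (-1) 0 1) //; try lra; ring.
have qy2 : q 0 (1 + 1) = 4 * q 0 1 by rewrite (@homE 2 0 1) //; try lra; ring.
have qy2' : q 0 (- (1 + 1)) = 4 * q 0 1 by rewrite (@homE (-2) 0 1) //; try lra; ring.
have qx2 : q (1 + 1) 0 = 4 * q 1 0 by rewrite (@homE 2 1 0) //; try lra; ring.
have qxy : q 1 1 + q 1 (- (1)) = 2 * q 1 0 + 2 * q 0 1.
  by rewrite -par Rplus_0_r Rplus_0_l Rminus_0_r Rminus_0_l.
apply/matrixP => i j.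
rewrite !mxE !big_ord_recl !big_ord0 !mxE /= !big_ord_recl !big_ord0 !mxE /=.
rewrite -!RplusE -!RmultE.
by case: i => [[|[|i]] hi] //; case: j => [[|[|j]] hj] //;
  rewrite /e1 /e2 /= ?Rplus_0_l ?Rplus_0_r ?Ropp_0; lra.
Qed.

Unset Implicit Arguments.

Theorem proposition4p4 (U : R * R -> R) :
  Cinf_T2 U ->
  Qmx U = ((Pmx^T *m Dmx (fun z => - U z)) *m Pmx)%R.
Proof.
move=> [sU _].
have hW : continuous2 (fun z => - U z) by apply/continuous2_opp/smooth2_continuous.
rewrite /Qmx /Dmx.
have -> : Q_form U = (fun l1 l2 => D_form (fun z => - U z) l2 (- l1)).
  apply: functional_extensionality => l1; apply: functional_extensionality => l2.
  exact: Q_form_rotate.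
by apply: sym_mx_of_form_rotate; [apply: D_form_scale | apply: D_form_parallelogram].
Qed.
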